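(* Let $A\in\mathbb{R}^{2\times 2}$ be a symmetric matrix with eigenvalues $1$ and $\lambda>0$. Identify $\mathbb{C}$ with $\mathbb{R}^2$ via $x+iy\leftrightarrow (x,y)^t$, so that $A$ acts on $\mathbb{C}$ as an $\mathbb{R}$-linear map. Then \[ \{h\cdot\overline{Ah} : h\in\mathbb{C}\}=\Sigma\Bigl(\arcsin\tfrac{|\lambda-1|}{\lambda+1}\Bigr), \] where $h\cdot\overline{Ah}$ is the product of the complex numbers $h$ and $\overline{Ah}$ (complex conjugate of $Ah$).
   Context: For $0\le\varphi\le\frac{\pi}{2}$, the sector is $\Sigma(\varphi):=\{z\in\mathbb{C}\setminus\{0\}: |\arg z|\le\varphi\}\cup\{0\}$, where $\arg$ is the principal argument with values in $(-\pi,\pi]$. *)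

From Stdlib Require Import Reals.
From Coquelicot Require Import Coquelicot.
Open Scope R_scope.

(* Principal argument with values in (-PI, PI] (the usual atan2);
   the value at 0 is irrelevant (sector handles 0 separately). *)
Definition Carg (z : C) : R :=
  let x := fst z in let y := snd z in
  if Rlt_dec 0 x then atan (y / x)
  else if Rlt_dec x 0 then
    (if Rle_dec 0 y then atan (y / x) + PI else atan (y / x) - PI)
  else if Rlt_dec 0 y then PI / 2
  else if Rlt_dec y 0 then - (PI / 2)
  else 0.

Definition sector (phi : R) (z : C) : Prop :=
  z = (0, 0) \/ (z <> (0, 0) /\ Rabs (Carg z) <= phi).

Definition mat_apply (a11 a12 a21 a22 : R) (h : C) : C :=
  (a11 * fst h + a12 * snd h, a21 * fst h + a22 * snd h).

Definition is_eigenvalue (a11 a12 a21 a22 mu : R) : Prop :=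
  exists v : C, v <> (0, 0) /\ mat_apply a11 a12 a21 a22 v = (mu * fst v, mu * snd v).

(* Write A h = alpha h + beta conj(h) with alpha = tr A / 2 real and
   |beta|^2 = alpha^2 - det A.  Then h conj(A h) = alpha |h|^2 + conj(beta) h^2,
   and as h ranges over C the pair (|h|^2, h^2) ranges over all (r, w) with
   |w| = r.  So the image is the cone over the disc of centre alpha and radius
   |beta|: z lies in it iff |z - alpha r| = |beta| r for some r >= 0, i.e. iff
   det A r^2 - tr A (Re z) r + |z|^2 has a nonnegative root.  With tr A = 1 + lam
   and det A = lam the discriminant condition reads Re z > 0 and
   4 lam (Im z)^2 <= (lam - 1)^2 (Re z)^2 (or z = 0), which is the sector of
   half-angle arcsin (|lam - 1| / (lam + 1)). *)

From Stdlib Require Import Reals Lra Psatz.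
From Coquelicot Require Import Coquelicot.
Open Scope R_scope.

Lemma is_eigenvalue_sym a b c mu :
  is_eigenvalue a b b c mu <-> mu * mu - (a + c) * mu + (a * c - b * b) = 0.
Proof.
  set (chi := mu * mu - (a + c) * mu + (a * c - b * b)).
  unfold is_eigenvalue, mat_apply; split.
  - intros [[x y] [Hv Heq]]; simpl in Heq; injection Heq as Ex Ey.
    (* adj (A - mu) (A - mu) = chi, applied to the eigenvector *)
    assert (Hx : chi * x = 0).
    { transitivity ((c - mu) * (a * x + b * y - mu * x) - b * (b * x + c * y - mu * y));
        [unfold chi; ring | rewrite Ex, Ey; ring]. }
    assert (Hy : chi * y = 0).
    { transitivity ((a - mu) * (b * x + c * y - mu * y) - b * (a * x + b * y - mu * x));
        [unfold chi; ring | rewrite Ex, Ey; ring]. }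
    destruct (Req_dec x 0) as [-> | Hx0]; [destruct (Req_dec y 0) as [-> | Hy0] |].
    + now contradiction Hv.
    + now destruct (Rmult_integral _ _ Hy).
    + now destruct (Rmult_integral _ _ Hx).
  - intros Hchi.
    destruct (Req_dec b 0) as [-> | Hb]; [destruct (Req_dec mu a) as [-> | Hma] |].
    + exists (1, 0); split; [intros E; injection E; lra |].
      simpl; f_equal; ring.
    + exists (0, 1); split; [intros E; injection E; lra |].
      simpl; f_equal; [ring |].
      assert (Hc : (mu - a) * (mu - c) = 0) by (unfold chi in Hchi; lra).
      destruct (Rmult_integral _ _ Hc); lra.
    + exists (b, mu - a); split; [intros E; injection E; lra |].
      simpl; f_equal; [ring | unfold chi in Hchi; nra].
Qed.

Lemma sym_spectrum_trace_det a b c l1 l2 :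
  (forall mu, is_eigenvalue a b b c mu <-> mu = l1 \/ mu = l2) ->
  a + c = l1 + l2 /\ a * c - b * b = l1 * l2.
Proof.
  intros Hspec.
  assert (Hroot : forall mu, mu * mu - (a + c) * mu + (a * c - b * b) = 0 <-> mu = l1 \/ mu = l2).
  { intros mu; rewrite <- is_eigenvalue_sym; apply Hspec. }
  assert (R1 := proj2 (Hroot l1) (or_introl eq_refl)).
  assert (R2 := proj2 (Hroot l2) (or_intror eq_refl)).
  destruct (Req_dec l1 l2) as [<- | Hl].
  - (* by Vieta, a + c - l1 is also a root *)
    assert (R3 : (a + c - l1) * (a + c - l1) - (a + c) * (a + c - l1) + (a * c - b * b) = 0) by lra.
    destruct (proj1 (Hroot _) R3); split; nra.
  - assert (Hprod : (l1 - l2) * (l1 + l2 - (a + c)) = 0) by lra.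
    destruct (Rmult_integral _ _ Hprod); [lra |]; split; nra.
Qed.

Lemma Cmult_conj_mat_apply_sym a b c (h : C) :
  Cmult h (Cconj (mat_apply a b b c h)) =
  Cplus (Cmult (RtoC ((a + c) / 2)) (RtoC (Cmod h ^ 2))) (Cmult ((a - c) / 2, - b) (Cmult h h)).
Proof.
  rewrite Cmod2_conj; destruct h as [x y].
  unfold mat_apply, Cconj, Cmult, Cplus, RtoC; simpl; f_equal; field.
Qed.

Lemma C_sqrt_exists (w : C) : exists h : C, Cmult h h = w.
Proof.
  destruct w as [u v].
  set (rho := Cmod (u, v)).
  assert (Hrho : rho * rho = u * u + v * v).
  { unfold rho; rewrite <- Rsqr_def, Rsqr_pow2, Cmod2_alt; simpl; ring. }
  assert (Hu : Rabs u <= rho) by apply (re_le_Cmod (u, v)).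
  apply Rabs_le_between in Hu.
  set (sg := if Rle_dec 0 v then 1 else -1).
  set (x := sqrt ((rho + u) / 2)); set (y := sg * sqrt ((rho - u) / 2)).
  assert (Hx2 : x * x = (rho + u) / 2) by (apply sqrt_sqrt; lra).
  assert (Hy2 : y * y = (rho - u) / 2).
  { unfold y; transitivity ((sg * sg) * (sqrt ((rho - u) / 2) * sqrt ((rho - u) / 2))); [ring |].
    rewrite sqrt_sqrt by lra; unfold sg; destruct Rle_dec; ring. }
  assert (Hxy : x * y = v / 2).
  { unfold x, y; rewrite Rmult_comm, Rmult_assoc, <- sqrt_mult by lra.
    replace ((rho - u) / 2 * ((rho + u) / 2)) with ((v / 2)²) by (unfold Rsqr; nra).
    rewrite sqrt_Rsqr_abs; unfold sg, Rabs; destruct Rle_dec, Rcase_abs; lra. }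
  exists (x, y); unfold Cmult; simpl; f_equal; lra.
Qed.

Lemma image_real_plus_square_iff (al : R) (ga z : C) :
  (exists h : C, z = Cplus (Cmult al (RtoC (Cmod h ^ 2))) (Cmult ga (Cmult h h))) <->
  exists r, 0 <= r /\ Cmod (Cminus z (Cmult al r)) = Cmod ga * r.
Proof.
  split.
  - intros [h ->]; exists (Cmod h ^ 2); split; [apply pow2_ge_0 |].
    set (n := Cmod h ^ 2).
    replace (Cminus (Cplus (Cmult al n) (Cmult ga (Cmult h h))) (Cmult al n))
      with (Cmult ga (Cmult h h)) by ring.
    rewrite !Cmod_mult; unfold n; ring.
  - intros [r [Hr Hmod]].
    assert (Hw : exists w, Cmod w = r /\ z = Cplus (Cmult al r) (Cmult ga w)).
    { destruct (Ceq_dec ga 0) as [-> | Hga].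
      - exists (RtoC r); split; [rewrite Cmod_R; apply Rabs_pos_eq, Hr |].
        rewrite Cmod_0, Rmult_0_l in Hmod; apply Cmod_eq_0 in Hmod.
        replace z with (Cplus (Cminus z (Cmult al r)) (Cmult al r)) by ring.
        rewrite Hmod; ring.
      - exists (Cdiv (Cminus z (Cmult al r)) ga); split.
        + rewrite Cmod_div, Hmod by assumption; field.
          now apply Cmod_gt_0 in Hga; apply Rgt_not_eq.
        + field; assumption. }
    destruct Hw as [w [Hwr ->]]; destruct (C_sqrt_exists w) as [h <-].
    exists h; replace (Cmod h ^ 2) with r; [reflexivity |].
    rewrite <- Hwr, Cmod_mult; ring.
Qed.

Lemma Cmod_eq_iff (u : C) (k : R) :
  0 <= k -> Cmod u = k <-> fst u * fst u + snd u * snd u = k * k.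
Proof.
  intros Hk; rewrite <- !Rsqr_def; split.
  - intros <-; rewrite !Rsqr_pow2, Cmod2_alt; reflexivity.
  - intros E; apply Rsqr_inj; [apply Cmod_ge_0 | exact Hk |].
    rewrite <- E, !Rsqr_pow2, Cmod2_alt; reflexivity.
Qed.

Lemma image_mat_apply_sym_iff a b c p q :
  (exists h : C, (p, q) = Cmult h (Cconj (mat_apply a b b c h))) <->
  exists r, 0 <= r /\ (a * c - b * b) * r * r - (a + c) * p * r + (p * p + q * q) = 0.
Proof.
  setoid_rewrite Cmult_conj_mat_apply_sym; rewrite image_real_plus_square_iff.
  assert (Hga : Cmod ((a - c) / 2, - b) ^ 2 = (a - c) / 2 * ((a - c) / 2) + b * b)
    by (rewrite Cmod2_alt; simpl; ring).
  split; intros [r [Hr E]]; exists r; split; try exact Hr.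
  - apply Cmod_eq_iff in E; [| apply Rmult_le_pos; [apply Cmod_ge_0 | exact Hr]].
    simpl in E; nra.
  - apply Cmod_eq_iff; [apply Rmult_le_pos; [apply Cmod_ge_0 | exact Hr] |].
    simpl; nra.
Qed.

Lemma exists_nonneg_root_iff a b c :
  0 < a -> 0 <= c ->
  (exists r, 0 <= r /\ a * r * r - b * r + c = 0) <-> c = 0 \/ (0 < b /\ 4 * a * c <= b * b).
Proof.
  intros Ha Hc; split.
  - intros [r [Hr E]].
    destruct (Req_dec c 0) as [Hc0 | Hc0]; [now left | right].
    assert (Hr0 : 0 < r) by (destruct Hr as [| <-]; [assumption | lra]).
    split; [nra |].
    assert (Hdisc : b * b - 4 * a * c = (2 * a * r - b) * (2 * a * r - b)) by nra.
    pose proof (Rle_0_sqr (2 * a * r - b)); unfold Rsqr in *; lra.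
  - intros [-> | [Hb Hdisc]]; [exists 0; split; [lra | ring] |].
    set (s := sqrt (b * b - 4 * a * c)).
    assert (Hs : s * s = b * b - 4 * a * c) by (apply sqrt_sqrt; lra).
    assert (Hs0 : 0 <= s) by apply sqrt_pos.
    exists ((b + s) / (2 * a)); split.
    + apply Rdiv_le_0_compat; lra.
    + replace (a * ((b + s) / (2 * a)) * ((b + s) / (2 * a)) - b * ((b + s) / (2 * a)) + c)
        with ((s * s - (b * b - 4 * a * c)) / (4 * a)) by (field; lra).
      rewrite Hs; field; lra.
Qed.

Lemma atan_le_iff x y : atan x <= atan y <-> x <= y.
Proof.
  split; intros Hxy.
  - destruct (Rle_or_lt x y) as [| Hlt]; [assumption |].
    apply atan_increasing in Hlt; lra.
  - destruct Hxy as [Hlt | ->]; [left; now apply atan_increasing | apply Rle_refl].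
Qed.

Lemma Rabs_atan_le_iff t k : Rabs (atan t) <= atan k <-> Rabs t <= k.
Proof. rewrite !Rabs_le_between, <- atan_opp, !atan_le_iff; reflexivity. Qed.

Lemma sector_atan_iff k p q :
  0 <= k ->
  sector (atan k) (p, q) <-> (p = 0 /\ q = 0) \/ (0 < p /\ Rabs q <= k * p).
Proof.
  intros Hk.
  assert (Hk2 : atan k < PI / 2) by (pose proof (atan_bound k); lra).
  assert (Hatan := atan_bound (q / p)).
  assert (Hslope : 0 < p -> Rabs (atan (q / p)) <= atan k <-> Rabs q <= k * p).
  { intros Hp; rewrite Rabs_atan_le_iff, Rabs_div, (Rabs_pos_eq p), Rle_div_l by lra.
    reflexivity. }
  unfold sector, Carg; simpl; split.
  - intros [E | [Hne Harg]]; [injection E; intros; now left | right].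
    destruct (Rlt_dec 0 p) as [Hp | Hp]; [split; [| apply Hslope]; assumption | exfalso].
    (* for p <= 0 and (p, q) <> 0, |Carg (p, q)| >= PI / 2 > atan k *)
    destruct (Rlt_dec p 0); [destruct Rle_dec |].
    + rewrite Rabs_pos_eq in Harg; lra.
    + rewrite Rabs_left in Harg; lra.
    + destruct (Rlt_dec 0 q); [rewrite Rabs_pos_eq in Harg; lra |].
      destruct (Rlt_dec q 0); [rewrite Rabs_Ropp, Rabs_pos_eq in Harg; lra |].
      apply Hne; f_equal; lra.
  - intros [[-> ->] | [Hp Hq]]; [now left | right].
    split; [intros E; injection E; lra |].
    destruct (Rlt_dec 0 p); [now apply Hslope | lra].
Qed.

Lemma sector_asin_iff s p q :
  0 <= s < 1 ->
  sector (asin s) (p, q) <-> (p = 0 /\ q = 0) \/ (0 < p /\ (1 - s * s) * (q * q) <= s * s * (p * p)).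
Proof.
  intros Hs.
  assert (Hd : 0 < 1 - s²) by (unfold Rsqr; nra).
  set (k := s / sqrt (1 - s²)).
  assert (Hsq : 0 < sqrt (1 - s²)) by (apply sqrt_lt_R0, Hd).
  assert (Hk : 0 <= k) by (apply Rdiv_le_0_compat; lra).
  assert (Hk2 : (1 - s * s) * (k * k) = s * s).
  { unfold k; replace (s / sqrt (1 - s²) * (s / sqrt (1 - s²)))
      with (s * s / (sqrt (1 - s²) * sqrt (1 - s²))) by (field; lra).
    rewrite sqrt_sqrt by lra; unfold Rsqr; field; unfold Rsqr in Hd; lra. }
  rewrite asin_atan, sector_atan_iff by (assumption || lra).
  fold k; apply or_iff_compat_l; split; intros [Hp Hq]; split; try exact Hp.
  - rewrite <- (Rabs_pos_eq (k * p)) in Hq by nra.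
    apply Rsqr_le_abs_1 in Hq; unfold Rsqr in Hq; nra.
  - rewrite <- (Rabs_pos_eq (k * p)) by nra.
    apply Rsqr_le_abs_0; unfold Rsqr; nra.
Qed.

Lemma sector_asin_eigenvalue_ratio_iff lam p q :
  0 < lam ->
  sector (asin (Rabs (lam - 1) / (lam + 1))) (p, q) <->
  (p = 0 /\ q = 0) \/ (0 < p /\ 4 * lam * (q * q) <= (lam - 1) * (lam - 1) * (p * p)).
Proof.
  intros Hlam.
  set (s := Rabs (lam - 1) / (lam + 1)).
  assert (Hl2 : 0 < (lam + 1) * (lam + 1)) by nra.
  assert (Hs2 : s * s * ((lam + 1) * (lam + 1)) = (lam - 1) * (lam - 1)).
  { unfold s; rewrite <- Rsqr_def, Rsqr_div', <- Rsqr_abs; unfold Rsqr; field; lra. }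
  assert (H4 : (1 - s * s) * ((lam + 1) * (lam + 1)) = 4 * lam) by nra.
  assert (Hs : 0 <= s < 1).
  { assert (Hs0 : 0 <= s) by (apply Rdiv_le_0_compat; [apply Rabs_pos | lra]).
    assert (s * s < 1); [apply Rmult_lt_reg_r with ((lam + 1) * (lam + 1)) |]; nra. }
  rewrite sector_asin_iff by exact Hs.
  apply or_iff_compat_l; split; intros [Hp Hq]; split; try exact Hp.
  - rewrite <- H4, <- Hs2; nra.
  - apply Rmult_le_reg_r with ((lam + 1) * (lam + 1)); nra.
Qed.

Theorem lemma3 (a11 a12 a21 a22 lam : R) :
  a12 = a21 ->
  0 < lam ->
  (forall mu : R, is_eigenvalue a11 a12 a21 a22 mu <-> (mu = 1 \/ mu = lam)) ->
  forall z : C,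
    (exists h : C, z = Cmult h (Cconj (mat_apply a11 a12 a21 a22 h))) <->
    sector (asin (Rabs (lam - 1) / (lam + 1))) z.
Proof.
  intros <- Hlam Hspec [p q].
  destruct (sym_spectrum_trace_det _ _ _ _ _ Hspec) as [Htr Hdet].
  rewrite image_mat_apply_sym_iff, sector_asin_eigenvalue_ratio_iff by exact Hlam.
  setoid_rewrite Htr; setoid_rewrite Hdet.
  rewrite exists_nonneg_root_iff by nra.
  split; intros [Hz | [Hp Hq]].
  - left; split; nra.
  - right; split; nra.
  - left; destruct Hz as [-> ->]; ring.
  - right; split; nra.
Qed.
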